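(* Let $k\ge1$ be an integer and write $[k+]=\{1,2,\ldots,k\}$. Then $d(A)\le d([k+])$ for every nonempty set $A\subseteq\{0,1,\ldots,k\}$, and if $k\notin\{1,3\}$ then equality holds only for $A=[k+]$. Equivalently, in base $2$ lunar arithmetic, among all $k$-digit numbers $n$ (i.e. $2^{k-1}\le n<2^k$), the maximal value of $d_2(n)$ occurs at $n=2^k-2$ (binary $11\ldots10$), and this is the unique maximum when $k\notin\{2,4\}$.
   Context: $\mathbb{N}=\{0,1,2,\ldots\}$. For $A,B\subseteq\mathbb{N}$, $A+B=\{a+b:a\in A,b\in B\}$. For a nonempty finite $C\subseteq\mathbb{N}$, $B\subseteq\mathbb{N}$ is a divisor of $C$ if $B+D=C$ for some $D\subseteq\mathbb{N}$, and $d(C)$ is the number of divisors of $C$. Base-$b$ lunar arithmetic ($b\ge2$): for numbers with base-$b$ digits $x=\sum_i x_ib^i$, $y=\sum_j y_jb^j$ ($0\le x_i,y_j\le b-1$), the lunar product is $x\otimes y=\sum_n\big(\max_{i+j=n}\min(x_i,y_j)\big)b^n$. For a positive integer $n$, $d_b(n)$ is the number of positive integers $m$ such that $m\otimes q=n$ for some integer $q$ (the lunar divisors of $n$). *)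

From mathcomp Require Import all_boot all_order.
Set Implicit Arguments. Unset Strict Implicit. Unset Printing Implicit Defensive.

(* Finite subsets of N contained in {0,...,n-1} are represented as
   {set 'I_n}.  [sumset_eq B D C] says that B + D = C in N, i.e. every
   sum b + d (b in B, d in D) lies below n (so that the sumset can be
   compared inside 'I_n) and the set of these sums is exactly C. *)
Definition sumset_eq (n : nat) (B D C : {set 'I_n}) : bool :=
  [forall b in B, forall d in D, b + d < n] &&
  [forall c : 'I_n,
     (c \in C) == [exists b in B, exists d in D, (b + d)%N == c :> nat]].

(* If C is a nonempty subset of
   {0,..,n-1} and B + D = C with B, D subsets of N, then B and D are
   automatically subsets of {0,..,n-1}; hence counting B among the
   subsets of 'I_n counts all divisors of C in N. *)
Definition ndiv (n : nat) (C : {set 'I_n}) : nat :=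
  #|[set B : {set 'I_n} | [exists D : {set 'I_n}, sumset_eq B D C]]|.

Definition kplus (k : nat) : {set 'I_k.+1} := [set i : 'I_k.+1 | 0 < i].

Definition ldigit (b x i : nat) : nat := x %/ b ^ i %% b.

(* Lunar product.  For b >= 2 every nonzero digit of x sits at a
   position i < x (and likewise for y), so all nonzero digits of the
   product sit at positions t < x + y. *)
Definition lunar_mul (b x y : nat) : nat :=
  \sum_(t < x + y)
     (\max_(i < t.+1) minn (ldigit b x i) (ldigit b y (t - i))) * b ^ t.

(* For n >= 1
   (and b >= 2) any such m and q have at most as many digits as n, hence
   are < b ^ n; so the bounded search below counts all lunar divisors. *)
Definition lunar_ndiv (b n : nat) : nat :=
  #|[set m : 'I_(b ^ n) |
       (0 < m) && [exists q : 'I_(b ^ n), lunar_mul b m q == n]]|.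

From mathcomp Require Import all_boot all_order zify.
Set Implicit Arguments. Unset Strict Implicit. Unset Printing Implicit Defensive.

(* A divisor B of a nonempty A (B + D = A) yields a divisor of the hull
   [min A, max A] of A: add to B every x in [min B, max B] such that
   x + (min A - min B) is not in A.  This map is injective, and for a hole x of
   A it never yields [min A, x]; hence d(A) <= d(hull A), strictly unless A is
   an interval.  A divisor of [m, M] is a translate, by some s <= m, of a set
   P containing 0 with P + [0, L - max P] = [0, L], where L = M - m; hence
   d([m, M]) = (m + 1) c(L), with c(L) the number of such covers P.  Moving,
   dropping or adding the top element of covers gives c(0) = 1,
   c(L) < c(L + 1) <= 2 c(L) (strictly when L > 0) and
   c(L) + c(L + 1) <= c(L + 2), from which (m + 1) c(M - m) <= 2 c(k - 1)
   = d([1, k]), with equality only for [m, M] = [1, k] unless k is 1 or 3.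
   In base 2 the digit positions of a lunar product are the sumset of those of
   the factors, so d_2(n) is d of the digit positions of n, and those of
   2^(k+1) - 2 form [1, k]. *)

Section Digits.
Variable b : nat.
Hypothesis b_gt1 : 1 < b.

Let b_gt0 : 0 < b. Proof. exact: ltnW. Qed.

Lemma ldigit0 x : ldigit b x 0 = x %% b.
Proof. by rewrite /ldigit expn0 divn1. Qed.

Lemma ldigitS x i : ldigit b x i.+1 = ldigit b (x %/ b) i.
Proof. by rewrite /ldigit expnS divnMA. Qed.

Lemma ldigit_lt x i : ldigit b x i < b.
Proof. by rewrite /ldigit ltn_pmod. Qed.

Lemma ldigit_cons c s i : c < b ->
  ldigit b (c + b * s) i = if i is j.+1 then ldigit b s j else c.
Proof.
move=> lt_cb; case: i => [|j]; first by rewrite ldigit0 addnC mulnC modnMDl modn_small.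
by rewrite ldigitS addnC mulnC divnMDl // divn_small // addn0.
Qed.

Lemma eq_from_ldigit x y : (forall i, ldigit b x i = ldigit b y i) -> x = y.
Proof.
elim: {x y}(x + y).+1 {-2}x {-2}y (ltnSn (x + y)) => [//|N IH] x y lt_xyN eq_xy.
have [/eqP|xy_gt0] := posnP (x + y); first by rewrite addn_eq0 => /andP[/eqP-> /eqP->].
rewrite (divn_eq x b) (divn_eq y b) -!ldigit0 eq_xy; congr (_ * _ + _).
apply: IH => [|i]; last by rewrite -!ldigitS.
have := leq_div x b; have := leq_div y b.
case: (posnP x) => [->|/(ltn_Pdiv b_gt1)]; case: (posnP y) => [->|/(ltn_Pdiv b_gt1)];
  rewrite ?div0n; lia.
Qed.

Lemma ldigit_sum (c : nat -> nat) T i : (forall t, c t < b) ->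
  ldigit b (\sum_(t < T) c t * b ^ t) i = if i < T then c i else 0.
Proof.
elim: T c i => [|T IH] c i c_lt; first by rewrite big_ord0 /ldigit div0n mod0n.
rewrite big_ord_recl expn0 muln1.
under eq_bigr => t _ do rewrite /= /bump /= add1n expnS mulnCA.
rewrite -big_distrr ldigit_cons //; case: i => [|j] //=.
by rewrite (IH (fun t => c t.+1)).
Qed.

Lemma sum_digits_lt (c : nat -> nat) T : (forall t, c t < b) ->
  \sum_(t < T) c t * b ^ t < b ^ T.
Proof.
move=> c_lt; elim: T => [|T IH]; first by rewrite big_ord0.
rewrite big_ord_recr expnS /=; have := c_lt T; move: IH.
set s := bigop _ _ _; set a := b ^ T; nia.
Qed.

Lemma ldigit_gt0_leq x i : 0 < ldigit b x i -> b ^ i <= x.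
Proof.
rewrite /ldigit => digit_gt0; rewrite -(@divn_gt0 (b ^ i)) ?expn_gt0 ?b_gt0 //.
by case: (x %/ b ^ i) digit_gt0; rewrite ?mod0n.
Qed.

Lemma ldigit_small x T i : x < b ^ T -> T <= i -> ldigit b x i = 0.
Proof.
move=> x_lt le_Ti; rewrite /ldigit divn_small ?mod0n //.
by apply: leq_trans x_lt _; rewrite leq_exp2l.
Qed.

End Digits.

Lemma bigmax_bits m (F : 'I_m -> nat) : (forall i, F i < 2) ->
  \max_(i < m) F i = [exists i, F i == 1].
Proof.
move=> F_lt2; case: existsP => [[i /eqP Fi1]|no1] /=.
  apply/eqP; rewrite eqn_leq -{2}Fi1 leq_bigmax andbT.
  by apply/bigmax_leqP => j _; have := F_lt2 j; lia.
apply/eqP; rewrite -leqn0; apply/bigmax_leqP => j _.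
have := F_lt2 j; have /eqP : F j != 1 by apply/eqP => Fj1; apply: no1; exists j; rewrite Fj1.
lia.
Qed.

Lemma minn_eq1 a c : a < 2 -> c < 2 -> (minn a c == 1) = (a == 1) && (c == 1).
Proof. by case: a => [|[|a]] // _; case: c => [|[|c]]. Qed.

Lemma ldigit2_eq1 x i : (ldigit 2 x i == 1) = ldigit 2 x i :> nat.
Proof. by have := @ldigit_lt 2 isT x i; case: (ldigit 2 x i) => [|[|]]. Qed.

Lemma ldigit2_eq x y i : (ldigit 2 x i == 1) = (ldigit 2 y i == 1) -> ldigit 2 x i = ldigit 2 y i.
Proof. by move=> eq1; rewrite -ldigit2_eq1 eq1 ldigit2_eq1. Qed.

Lemma sum_pos_pow2 m : \sum_(t < m.+1) (0 < t) * 2 ^ t = 2 ^ m.+1 - 2.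
Proof.
elim: m => [|m IH]; first by rewrite big_ord1.
rewrite big_ord_recr IH /= mul1n (expnS 2 m.+1) (expnS 2 m); have := expn_gt0 2 m; lia.
Qed.

Definition bit_sum x y t :=
  [exists i : 'I_t.+1, (ldigit 2 x i == 1) && (ldigit 2 y (t - i) == 1)].

Lemma bit_sumP x y i j : ldigit 2 x i = 1 -> ldigit 2 y j = 1 -> bit_sum x y (i + j).
Proof.
move=> xi yj; apply/existsP; exists (Ordinal (leq_addr j i.+1 : i < (i + j).+1)) => /=.
by rewrite xi addKn yj.
Qed.

Lemma ldigit_lunar_mul2 x y t : ldigit 2 (lunar_mul 2 x y) t = bit_sum x y t.
Proof.
have ldigit_lt2 z i : ldigit 2 z i < 2 by exact: ldigit_lt.
have max_bits s : \max_(i < s.+1) minn (ldigit 2 x i) (ldigit 2 y (s - i)) = bit_sum x y s.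
  rewrite bigmax_bits => [|i]; last exact: leq_ltn_trans (geq_minl _ _) (ldigit_lt2 _ _).
  by congr nat_of_bool; apply: eq_existsb => i; rewrite minn_eq1.
rewrite /lunar_mul; under eq_bigr => s _ do rewrite max_bits.
rewrite (@ldigit_sum 2 isT (fun s => nat_of_bool (bit_sum x y s))) => // [|s]; last first.
  by case: (bit_sum x y s).
case: ltnP => // le_xy_t; case: (bit_sum x y t) / existsP => // [[i /andP[/eqP xi /eqP yti]]].
have := @ldigit_gt0_leq 2 isT x i; have := @ldigit_gt0_leq 2 isT y (t - i).
rewrite xi yti; have := ltn_expl i (isT : 1 < 2); have := ltn_expl (t - i) (isT : 1 < 2).
have := ltn_ord i; lia.
Qed.

Section GrowthBound.
Variables (p : nat -> nat) (k : nat).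
Hypotheses (k_gt0 : 0 < k) (p0_le1 : p 0 <= 1) (p_gt0 : forall L, 0 < p L)
  (p_incr : forall L, L < k -> p L < p L.+1)
  (p_le_double : forall L, L < k -> p L.+1 <= 2 * p L)
  (p_lt_double : forall L, 0 < L -> L < k -> p L.+1 < 2 * p L)
  (p_fib : forall L, L.+2 <= k -> p L.+1 + p L <= p L.+2).

Lemma p_addsub_leq i j : i <= j <= k -> p i + (j - i) <= p j.
Proof.
elim: j => [|j IH] /andP[le_ij le_jk].
  by rewrite (_ : i = 0) ?subnn ?addn0 //; lia.
have [->|ne_ij] := eqVneq i j.+1; first by rewrite subnn addn0.
have := IH ltac:(lia); have := @p_incr j ltac:(lia); lia.
Qed.

Lemma p_ratio i : i < k -> 3 * p i <= 2 * p i.+1 /\ (i != 1 -> 3 * p i < 2 * p i.+1).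
Proof.
case: i => [|i] lt_ik.
  by have := p_gt0 0; have := p_incr lt_ik; split; lia.
have := @p_fib i ltac:(lia); have := @p_le_double i ltac:(lia).
split=> [|ne_i0]; first lia.
by have := @p_lt_double i ltac:(lia) ltac:(lia); lia.
Qed.

Lemma p_span m j : 0 < m -> j + m <= k ->
  m.+1 * p j <= 2 * p (j + m).-1 /\
  (1 < m -> (m, j) != (2, 1) -> m.+1 * p j < 2 * p (j + m).-1).
Proof.
elim: m => [//|m IH] _ le_jmk.
have [->|m_gt0] := posnP m; first by rewrite addn1 /=; split; lia.
have [IH_le _] := IH m_gt0 ltac:(lia).
have [r_le r_lt] := @p_ratio (j + m).-1 ltac:(lia).
have -> : (j + m.+1).-1 = (j + m).-1.+1 by lia.
have [m1|m_ne1] := eqVneq m 1.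
  subst m; split=> [|_ ne_j1]; first lia.
  apply: leq_trans (r_lt _); first lia.
  by apply: contra ne_j1 => /eqP j1; apply/eqP; congr pair; lia.
have := p_gt0 (j + m).-1; split=> [|_ _]; nia.
Qed.

Lemma p_span_bound m M : m <= M <= k ->
  m.+1 * p (M - m) <= 2 * p k.-1 /\
  (m.+1 * p (M - m) = 2 * p k.-1 -> (m = 1 /\ M = k) \/ k = 1 \/ k = 3).
Proof.
move=> le_mMk.
have kE : k.-1.+1 = k by lia.
have [m0|m_gt0] := posnP m.
  subst m; rewrite subn0 mul1n.
  have := @p_addsub_leq M k ltac:(lia); have := @p_le_double k.-1 ltac:(lia).
  rewrite kE; split=> [|eq_p]; first lia.
  right; left; have [//|k1_gt0] := posnP k.-1; first lia.
  by have := p_lt_double k1_gt0 ltac:(lia); rewrite kE; lia.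
have := @p_addsub_leq (M - m) (k - m) ltac:(lia).
have [span_le span_lt] := @p_span m (k - m) m_gt0 ltac:(lia).
rewrite (_ : k - m + m = k) in span_le span_lt; last lia.
move=> le_p.
split=> [|eq_p]; first nia.
have Mk : M = k.
  apply/eqP; apply: contraT => ne_Mk.
  have : m.+1 * p (M - m) < m.+1 * p (k - m) by rewrite ltn_pmul2l //; lia.
  lia.
subst M; have [->|m_ne1] := eqVneq m 1; first by left.
right; right; have [m2j1|ne] := eqVneq (m, k - m) (2, 1); first by case: m2j1; lia.
have := span_lt ltac:(lia) ne; lia.
Qed.

End GrowthBound.

Section Subsets.
Variable n : nat.
Local Notation U := 'I_n.+1.

Definition memn (B : {set U}) (x : nat) : bool := (x < n.+1) && (inord x \in B).

Lemma memnE (B : {set U}) (y : U) : memn B y = (y \in B).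
Proof. by rewrite /memn ltn_ord inord_val. Qed.

Lemma memnP (B : {set U}) x : reflect (exists2 y : U, y \in B & y = x :> nat) (memn B x).
Proof.
apply: (iffP idP) => [/andP[lt_xn Bx]|[y By <-]]; last by rewrite memnE.
by exists (inord x); last exact: inordK.
Qed.

Lemma exists_ord x : x <= n -> exists y : U, y = x :> nat.
Proof. by move=> le_xn; exists (inord x); apply: inordK. Qed.

Definition setn (P : pred nat) : {set U} := [set x : U | P x].

Lemma in_setn P (x : U) : (x \in setn P) = P x.
Proof. by rewrite inE. Qed.

Lemma memn_setn P x : memn (setn P) x = (x < n.+1) && P x.
Proof. by rewrite /memn inE; case: ltnP => //= lt_xn; rewrite inordK. Qed.

Definition segment a c : {set U} := setn (fun x => a <= x <= c).

Lemma in_segment a c (x : U) : (x \in segment a c) = (a <= x <= c).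
Proof. exact: in_setn. Qed.

Definition maxs (B : {set U}) : nat := \max_(i in B) nat_of_ord i.
(* the minimum, as a maximum since nat has no top element; mins set0 = n *)
Definition mins (B : {set U}) : nat := n - \max_(i in B) (n - i).

Lemma leq_maxs (B : {set U}) (i : U) : i \in B -> i <= maxs B.
Proof. by move=> Bi; rewrite /maxs (bigmax_sup i). Qed.

Lemma maxs_lub (B : {set U}) c : (forall i : U, i \in B -> i <= c) -> maxs B <= c.
Proof. by move=> ub; apply/bigmax_leqP. Qed.

Lemma maxs_leqn (B : {set U}) : maxs B <= n.
Proof. by apply: maxs_lub => i _; rewrite -ltnS. Qed.

Lemma maxs_mem (B : {set U}) : B != set0 -> exists2 i : U, i \in B & i = maxs B :> nat.
Proof.
move=> B_ne0; have B_gt0 : 0 < #|B| by rewrite lt0n cards_eq0.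
by have [i Bi eq_max] := eq_bigmax_cond (fun i : U => nat_of_ord i) B_gt0; exists i.
Qed.

Lemma mins_leq (B : {set U}) (i : U) : i \in B -> mins B <= i.
Proof.
move=> Bi; have := @leq_bigmax_cond _ (fun j => j \in B) (fun j : U => n - j) i Bi.
by rewrite /mins; have := ltn_ord i; lia.
Qed.

Lemma mins_mem (B : {set U}) : B != set0 -> exists2 i : U, i \in B & i = mins B :> nat.
Proof.
move=> B_ne0; have B_gt0 : 0 < #|B| by rewrite lt0n cards_eq0.
have [i Bi eq_max] := eq_bigmax_cond (fun i : U => n - i) B_gt0.
by exists i; rewrite // /mins eq_max; have := ltn_ord i; lia.
Qed.

Lemma maxs_eq (B : {set U}) a : (forall i : U, i \in B -> i <= a) -> memn B a -> maxs B = a.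
Proof.
move=> ub /memnP[y By ya]; apply/eqP.
by rewrite eqn_leq maxs_lub //= -ya leq_maxs.
Qed.

Lemma mins_eq (B : {set U}) a : (forall i : U, i \in B -> a <= i) -> memn B a -> mins B = a.
Proof.
move=> lb /memnP[y By ya]; have B_ne0 : B != set0 by apply/set0Pn; exists y.
by have [z Bz zE] := mins_mem B_ne0; have := mins_leq By; have := lb z Bz; lia.
Qed.

Lemma memn0 (B : {set U}) : ord0 \in B -> memn B 0.
Proof. by rewrite -memnE. Qed.

Lemma segment_bounds a c : a <= c <= n -> mins (segment a c) = a /\ maxs (segment a c) = c.
Proof.
move=> le_acn; split; [apply: mins_eq | apply: maxs_eq] => [i||i|];
  rewrite ?in_segment ?memn_setn; lia.
Qed.

Lemma memn_bounds (B : {set U}) x : memn B x -> mins B <= x <= maxs B.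
Proof. by case/memnP=> y By <-; rewrite mins_leq // leq_maxs. Qed.

Lemma sumset_eqI (B D C : {set U}) :
  (forall b d : U, b \in B -> d \in D -> memn C (b + d)) ->
  (forall c : U, c \in C -> exists b : U, exists2 d : U, b \in B /\ d \in D & b + d = c) ->
  sumset_eq B D C.
Proof.
move=> sum_in split_in; apply/andP; split.
  apply/forallP => b; apply/implyP => Bb; apply/forallP => d; apply/implyP => Dd.
  by case/andP: (sum_in b d Bb Dd).
apply/forallP => c; apply/eqP; apply/idP/idP => [/split_in[b [d [Bb Dd] <-]]|].
  by apply/existsP; exists b; rewrite Bb; apply/existsP; exists d; rewrite Dd /=.
case/existsP => b /andP[Bb /existsP[d /andP[Dd /eqP bdc]]].
by rewrite -memnE -bdc sum_in.
Qed.

Lemma sumset_eq_memn (B D C : {set U}) (b d : U) :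
  sumset_eq B D C -> b \in B -> d \in D -> memn C (b + d).
Proof.
case/andP=> /forallP sum_lt /forallP sumE Bb Dd.
have lt_bd : b + d < n.+1.
  by have := sum_lt b; rewrite Bb => /forallP/(_ d); rewrite Dd.
rewrite /memn lt_bd (eqP (sumE (inord (b + d)))).
apply/existsP; exists b; rewrite Bb; apply/existsP; exists d.
by rewrite Dd /= inordK.
Qed.

Lemma sumset_eq_split (B D C : {set U}) (c : U) : sumset_eq B D C -> c \in C ->
  exists b : U, exists2 d : U, b \in B /\ d \in D & b + d = c.
Proof.
case/andP=> _ /forallP sumE; rewrite (eqP (sumE c)).
by case/existsP => b /andP[Bb /existsP[d /andP[Dd /eqP bdc]]]; exists b, d.
Qed.

Lemma memn_sumset (B D C : {set U}) t : sumset_eq B D C ->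
  memn C t = [exists i : 'I_t.+1, memn B i && memn D (t - i)].
Proof.
move=> BDC; apply/idP/existsP => [/memnP[c Cc <-]|[i /andP[/memnP[b Bb bE] /memnP[d Dd dE]]]].
  have [b [d [Bb Dd] bdE]] := sumset_eq_split BDC Cc.
  exists (inord b); rewrite inordK -?bdE; last lia.
  by rewrite addKn !memnE Bb.
by have := sumset_eq_memn BDC Bb Dd; rewrite bE dE subnKC // -ltnS.
Qed.

Definition divisorb (C B : {set U}) : bool := [exists D, sumset_eq B D C].

Lemma ndivE (C : {set U}) : ndiv C = #|[set B | divisorb C B]|.
Proof. by []. Qed.

Lemma divisor_bounds (A B D : {set U}) : A != set0 -> sumset_eq B D A ->
  [/\ B != set0, mins B <= mins A, memn D (mins A - mins B) &
      forall d : U, d \in D -> mins A - mins B <= d /\ maxs B + d <= maxs A].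
Proof.
move=> A_ne0 BDA.
have [a Aa aE] := mins_mem A_ne0.
have [b0 [d0 [Bb0 Dd0] b0d0E]] := sumset_eq_split BDA Aa.
have B_ne0 : B != set0 by apply/set0Pn; exists b0.
have [bm Bbm bmE] := mins_mem B_ne0; have [bM BbM bME] := maxs_mem B_ne0.
have D_bounds d : d \in D -> mins A - mins B <= d /\ maxs B + d <= maxs A.
  move=> Dd; have /memn_bounds := sumset_eq_memn BDA Bbm Dd.
  have /memn_bounds := sumset_eq_memn BDA BbM Dd; lia.
have := mins_leq Bb0; have := D_bounds _ Dd0 => -[le_d0 _] le_b0.
split=> //; first lia.
by apply/memnP; exists d0 => //; lia.
Qed.

Definition hull (A : {set U}) : {set U} := segment (mins A) (maxs A).

Lemma subset_hull (A : {set U}) : A \subset hull A.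
Proof. by apply/subsetP => x Ax; rewrite in_segment mins_leq // leq_maxs. Qed.

Definition fill (A B : {set U}) : {set U} :=
  setn (fun x => memn B x || ((mins B <= x <= maxs B) && ~~ memn A (x + (mins A - mins B)))).

Lemma mem_fill_bounds (A B : {set U}) i : i \in fill A B -> mins B <= i <= maxs B.
Proof. by rewrite in_setn => /orP[/memn_bounds|/andP[]]. Qed.

Lemma subset_fill (A B : {set U}) : B \subset fill A B.
Proof. by apply/subsetP => b Bb; rewrite in_setn memnE Bb. Qed.

Lemma fill_bounds (A B : {set U}) : B != set0 ->
  mins (fill A B) = mins B /\ maxs (fill A B) = maxs B.
Proof.
move=> B_ne0.
have [bm Bbm bmE] := mins_mem B_ne0; have [bM BbM bME] := maxs_mem B_ne0.
split; [apply: mins_eq | apply: maxs_eq] => [i||i|]; try by move/mem_fill_bounds/andP=> [].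
- by rewrite -bmE memnE in_setn memnE Bbm.
- by rewrite -bME memnE in_setn memnE BbM.
Qed.

Lemma fill_divisor (A B : {set U}) : A != set0 -> divisorb A B ->
  divisorb (hull A) (fill A B).
Proof.
move=> A_ne0 /existsP[D BDA].
have [B_ne0 le_mins /memnP[ds Dds dsE] D_bounds] := divisor_bounds A_ne0 BDA.
have [bM BbM bME] := maxs_mem B_ne0.
have := D_bounds _ Dds; have := maxs_leqn A => le_maxA [_ le_dsA].
apply/existsP; exists (segment (mins A - mins B) (maxs A - maxs B)); apply: sumset_eqI.
  move=> b d /mem_fill_bounds; rewrite in_segment memn_setn; lia.
move=> c; rewrite in_segment => /andP[le_minA_c le_c_maxA].
have [le_maxB_c|lt_c_maxB] := leqP (maxs B) (c - (mins A - mins B)).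
  have [d dE] := @exists_ord (c - maxs B) ltac:(lia).
  exists bM, d; rewrite ?(subsetP (subset_fill A B)) ?in_segment //; lia.
case Ac: (memn A c).
  case/memnP: Ac => c' Ac' c'E.
  have [b [d [Bb Dd] bdE]] := sumset_eq_split BDA Ac'.
  have := D_bounds _ Dd; have := mins_leq Bb.
  exists b, d; rewrite ?(subsetP (subset_fill A B)) ?in_segment //; lia.
have [b bE] := @exists_ord (c - (mins A - mins B)) ltac:(lia).
exists b, ds; last lia.
rewrite in_setn in_segment bE subnK ?Ac ?andbT; last lia.
by split; [apply/orP; right|]; lia.
Qed.

Lemma mem_divisor_fill (A B : {set U}) (x : U) : A != set0 -> divisorb A B ->
  (x \in B) = (x \in fill A B) && memn A (x + (mins A - mins B)).
Proof.
move=> A_ne0 /existsP[D BDA].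
have [_ _ /memnP[ds Dds dsE] _] := divisor_bounds A_ne0 BDA.
apply/idP/andP => [Bx|[]].
  by rewrite (subsetP (subset_fill A B)) // -dsE (sumset_eq_memn BDA).
by rewrite /fill in_setn memnE => /orP[//|/andP[_ /negPf->]].
Qed.

Lemma fill_inj (A : {set U}) : A != set0 -> {in [set B | divisorb A B] &, injective (fill A)}.
Proof.
move=> A_ne0 B1 B2; rewrite !inE => divB1 divB2 eq_fill.
have mins_fill B : divisorb A B -> mins (fill A B) = mins B.
  by case/existsP=> D /(divisor_bounds A_ne0)[B_ne0 _ _ _]; case: (fill_bounds A B_ne0).
apply/setP => x; rewrite (mem_divisor_fill x A_ne0 divB1) (mem_divisor_fill x A_ne0 divB2).
by rewrite -(mins_fill _ divB1) -(mins_fill _ divB2) eq_fill.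
Qed.

Lemma ndiv_fill (A : {set U}) : A != set0 -> ndiv A = #|fill A @: [set B | divisorb A B]|.
Proof. by move=> A_ne0; rewrite ndivE (card_in_imset (fill_inj A_ne0)). Qed.

Lemma fill_image_sub (A : {set U}) : A != set0 ->
  fill A @: [set B | divisorb A B] \subset [set B | divisorb (hull A) B].
Proof.
move=> A_ne0; apply/subsetP => C /imsetP[B]; rewrite inE => divB ->.
by rewrite inE fill_divisor.
Qed.

Lemma ndiv_le_hull (A : {set U}) : A != set0 -> ndiv A <= ndiv (hull A).
Proof. by move=> A_ne0; rewrite ndiv_fill // ndivE subset_leq_card // fill_image_sub. Qed.

Lemma segment_prefix_divisor a x c : a <= x <= c -> c <= n ->
  divisorb (segment a c) (segment a x).
Proof.
move=> le_axc le_cn; apply/existsP; exists (segment 0 (c - x)); apply: sumset_eqI.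
  by move=> b d; rewrite !in_segment memn_setn; lia.
move=> z; rewrite in_segment => le_azc.
have [le_zx|lt_xz] := leqP z x; first by exists z, ord0; rewrite ?in_segment /=; lia.
have [y yE] := @exists_ord x ltac:(lia); have [d dE] := @exists_ord (z - x) ltac:(lia).
by exists y, d; rewrite ?in_segment; lia.
Qed.

Lemma hole_not_fill (A B : {set U}) x : A != set0 -> divisorb A B ->
  x \in hull A -> x \notin A -> fill A B != segment (mins A) x.
Proof.
move=> A_ne0 divB; rewrite in_segment => hull_x Ax; apply/eqP => fillE.
case/existsP: divB => D BDA; have [B_ne0 _ /memnP[ds Dds dsE] _] := divisor_bounds A_ne0 BDA.
have [bM BbM bME] := maxs_mem B_ne0.
have [] := fill_bounds A B_ne0; rewrite fillE.
have [-> ->] := @segment_bounds (mins A) x ltac:(have := maxs_leqn A; lia).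
move=> minsBE maxsBE; have := sumset_eq_memn BDA BbM Dds.
by rewrite (_ : bM + ds = x) ?memnE ?(negPf Ax) //; lia.
Qed.

Lemma ndiv_lt_hull (A : {set U}) : A != set0 -> A != hull A -> ndiv A < ndiv (hull A).
Proof.
move=> A_ne0 ne_hull; rewrite ndiv_fill // ndivE; apply: proper_card; apply/properP.
split; first exact: fill_image_sub.
have /subsetPn[x hull_x Ax] : ~~ (hull A \subset A).
  by apply: contra ne_hull => sub; rewrite eqEsubset subset_hull.
exists (segment (mins A) x).
  move: hull_x; rewrite in_segment inE => ?.
  exact: segment_prefix_divisor (maxs_leqn A).
apply/imsetP => -[B]; rewrite inE => divB /esym/eqP.
by apply/negP; apply: hole_not_fill.
Qed.

(* [covers L P]: 0 \in P and P + [0, L - max P] = [0, L]. *)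
Definition covers L (P : {set U}) : bool :=
  [&& ord0 \in P, maxs P <= L &
   [forall x : U, (x <= maxs P) ==> [exists y in P, y <= x <= y + (L - maxs P)]]].

Definition ncovers L : nat := #|[set P | covers L P]|.

Lemma coversP L (P : {set U}) : reflect
  [/\ ord0 \in P, maxs P <= L &
   forall x : U, x <= maxs P -> exists2 y : U, y \in P & y <= x <= y + (L - maxs P)]
  (covers L P).
Proof.
apply: (iffP and3P) => -[P0 le_maxL cover]; split=> //.
  move=> x le_x; have /existsP[y /andP[Py ?]] := implyP (forallP cover x) le_x.
  by exists y.
apply/forallP => x; apply/implyP => /cover[y Py ?].
by apply/existsP; exists y; apply/andP.
Qed.

Lemma covers_neq0 L (P : {set U}) : covers L P -> P != set0.
Proof. by case/coversP=> P0 _ _; apply/set0Pn; exists ord0. Qed.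

Lemma covers_mem L (P : {set U}) (x : U) : covers L P -> x <= L ->
  exists2 y : U, y \in P & y <= x <= y + (L - maxs P).
Proof.
move=> covP le_xL; have /coversP[_ le_maxL cover] := covP.
have [le_x|lt_x] := leqP x (maxs P); first exact: cover.
by have [y Py yE] := maxs_mem (covers_neq0 covP); exists y; rewrite // yE; lia.
Qed.

Definition shiftdown (B : {set U}) (s : nat) : {set U} := setn (fun x => memn B (x + s)).
Definition shiftup (P : {set U}) (s : nat) : {set U} :=
  setn (fun x => (s <= x) && memn P (x - s)).

Lemma segment_divisor_covers m M (B : {set U}) : m <= M <= n ->
  divisorb (segment m M) B ->
  [/\ B != set0, mins B <= m & covers (M - m) (shiftdown B (mins B))].
Proof.
move=> le_mMn /existsP[D BDJ].
have J_ne0 : segment m M != set0.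
  by apply/set0Pn; have [y yE] := @exists_ord m ltac:(lia); exists y; rewrite in_segment yE; lia.
have [B_ne0 le_minsB /memnP[ds Dds dsE] D_bounds] := divisor_bounds J_ne0 BDJ.
have [minsJ maxsJ] := segment_bounds le_mMn.
rewrite minsJ maxsJ in le_minsB dsE D_bounds.
have [bm Bbm bmE] := mins_mem B_ne0; have [bM BbM bME] := maxs_mem B_ne0.
have maxs_down : maxs (shiftdown B (mins B)) = maxs B - mins B.
  apply: maxs_eq => [i|]; first by rewrite in_setn => /memn_bounds; lia.
  by rewrite memn_setn -bME subnK ?mins_leq // memnE BbM andbT; have := ltn_ord bM; lia.
split=> //; apply/coversP; rewrite maxs_down; split.
- by rewrite in_setn add0n -bmE memnE.
- by have := D_bounds _ Dds; lia.
have [_ maxs_ds] := D_bounds _ Dds.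
move=> x le_x; have [c cE] := @exists_ord (x + m) ltac:(lia).
have [y' [d [By' Dd] y'dE]] := sumset_eq_split BDJ (c := c) ltac:(rewrite in_segment; lia).
have [y yE] := @exists_ord (y' - mins B) ltac:(lia).
exists y; last by have := D_bounds _ Dd; have := mins_leq By'; lia.
by rewrite in_setn yE subnK ?mins_leq // memnE.
Qed.

Lemma mins_shiftup (P : {set U}) s : ord0 \in P -> s <= n -> mins (shiftup P s) = s.
Proof.
move=> P0 le_sn; apply: mins_eq => [i|]; first by rewrite in_setn => /andP[].
by rewrite memn_setn leqnn subnn memn0 // !andbT ltnS.
Qed.

Lemma shiftupK (P : {set U}) s : maxs P + s <= n -> shiftdown (shiftup P s) s = P.
Proof.
move=> le_n; apply/setP => x; rewrite in_setn memn_setn addnK leq_addl memnE /=.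
by case Px: (x \in P); rewrite ?andbF ?andbT //; have := leq_maxs Px; lia.
Qed.

Lemma shiftdownK (B : {set U}) : shiftup (shiftdown B (mins B)) (mins B) = B.
Proof.
apply/setP => x; rewrite in_setn memn_setn.
have [le_minx|lt_xmin] := leqP (mins B) x.
  by rewrite subnK // memnE (leq_ltn_trans (leq_subr _ _) (ltn_ord x)).
by apply/esym/negbTE/negP => /mins_leq; lia.
Qed.

Lemma shiftup_divisor m M s (P : {set U}) : m <= M <= n -> s <= m -> covers (M - m) P ->
  divisorb (segment m M) (shiftup P s).
Proof.
move=> le_mMn le_sm covP; have /coversP[_ le_maxP _] := covP.
apply/existsP; exists (segment (m - s) (m - s + (M - m - maxs P))); apply: sumset_eqI.
  move=> x d; rewrite in_setn in_segment memn_setn => /andP[le_sx /memnP[y Py yE]] ?.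
  by have := leq_maxs Py; lia.
move=> c; rewrite in_segment => le_mcM.
have [z zE] := @exists_ord (c - m) ltac:(lia).
have [y Py le_y] := covers_mem covP (x := z) ltac:(lia).
have [x xE] := @exists_ord (y + s) ltac:(have := leq_maxs Py; lia).
have [d dE] := @exists_ord (c - y - s) ltac:(lia).
exists x, d; last lia.
by rewrite in_setn in_segment xE addnK leq_addl memnE Py; lia.
Qed.

Lemma ndiv_segment m M : m <= M <= n -> ndiv (segment m M) = m.+1 * ncovers (M - m).
Proof.
move=> le_mMn; rewrite ndivE /ncovers.
pose f (B : {set U}) : 'I_m.+1 * {set U} := (inord (mins B), shiftdown B (mins B)).
have f_inj : {in [set B | divisorb (segment m M) B] &, injective f}.
  move=> B1 B2; rewrite !inE => div1 div2 [eq_min eq_down].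
  have [_ le1 _] := segment_divisor_covers le_mMn div1.
  have [_ le2 _] := segment_divisor_covers le_mMn div2.
  have {}eq_min : mins B1 = mins B2 by move/(congr1 val): eq_min; rewrite /= !inordK.
  by rewrite -(shiftdownK B1) -(shiftdownK B2) eq_down eq_min.
rewrite -(card_in_imset f_inj).
suff -> : f @: [set B | divisorb (segment m M) B] =
          setX [set: 'I_m.+1] [set P | covers (M - m) P].
  by rewrite cardsX cardsT card_ord.
apply/setP => -[s P]; rewrite !inE /=; apply/imsetP/idP => [[B]|covP].
  by rewrite inE => /(segment_divisor_covers le_mMn)[_ _ ?] [_ ->].
have /coversP[P0 le_maxP _] := covP; have le_sm : s <= m by rewrite -ltnS.
exists (shiftup P s); first by rewrite inE shiftup_divisor.
by rewrite /f mins_shiftup ?shiftupK ?inord_val //; lia.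
Qed.

Lemma maxs_set1_ord0 : maxs [set ord0 : U] = 0.
Proof. by apply: maxs_eq => [i /set1P->|]; rewrite ?memn0 ?set11. Qed.

Lemma covers_set1_ord0 L : covers L [set ord0].
Proof.
apply/coversP; rewrite maxs_set1_ord0; split=> // [|x le_x]; first exact: set11.
by exists ord0; rewrite ?set11 /=; lia.
Qed.

Lemma covers_leq L (P : {set U}) (x : U) : covers L P -> x \in P -> x <= maxs P <= L.
Proof. by case/coversP=> _ le_maxL _ Px; rewrite leq_maxs. Qed.

Lemma covers_maxs0 L (P : {set U}) : covers L P -> maxs P = 0 -> P = [set ord0].
Proof.
move=> covP maxs0; apply/setP => x; rewrite in_set1; apply/idP/eqP => [Px|->].
  by apply/val_inj; have := covers_leq covP Px; rewrite maxs0 /=; lia.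
by case/coversP: covP.
Qed.

Lemma covers_maxsL L (P : {set U}) : covers L P -> maxs P = L -> P = segment 0 L.
Proof.
move=> covP maxsL; apply/setP => x; rewrite in_segment /=; apply/idP/idP => [Px|le_xL].
  by have := covers_leq covP Px; lia.
have [y Py] := covers_mem covP le_xL; rewrite maxsL subnn addn0.
by rewrite -eqn_leq => /eqP/val_inj <-.
Qed.

Lemma covers_segment L : L <= n -> covers L (segment 0 L).
Proof.
move=> le_Ln; have [_ maxsL] := @segment_bounds 0 L le_Ln.
apply/coversP; rewrite maxsL; split=> // [|x le_x]; first by rewrite in_segment.
by exists x; rewrite ?in_segment; lia.
Qed.

Lemma ncovers_gt0 L : 0 < ncovers L.
Proof. by apply/card_gt0P; exists [set ord0]; rewrite inE covers_set1_ord0. Qed.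

Lemma ncovers0_le1 : ncovers 0 <= 1.
Proof.
rewrite /ncovers -(cards1 [set ord0 : U]); apply/subset_leq_card/subsetP => P.
rewrite !inE => covP; apply/eqP/(covers_maxs0 covP).
by case/coversP: covP; lia.
Qed.

Lemma ncovers_ltS L : L < n -> ncovers L < ncovers L.+1.
Proof.
move=> lt_Ln; apply/proper_card/properP; split.
  apply/subsetP => P; rewrite !inE => /coversP[P0 le_maxL cover].
  apply/coversP; split=> [//||x /cover[y Py ?]]; first lia.
  by exists y => //; lia.
exists (segment 0 L.+1); first by rewrite inE covers_segment.
rewrite inE; apply/negP => /coversP[_ ].
by have [_ ->] := @segment_bounds 0 L.+1 lt_Ln; lia.
Qed.

Definition lower_top (P : {set U}) : {set U} :=
  setn (fun x => (memn P x && (x != maxs P)) || (x == (maxs P).-1)).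

(* Replacing the top m of a cover of L + 1 by m - 1 gives a cover of L;
   recording whether m - 1 was already there makes this injective. *)
Definition drop_top (P : {set U}) : {set U} * bool :=
  if maxs P == 0 then ([set ord0], false) else (lower_top P, memn P (maxs P).-1).

Lemma maxs_lower_top (P : {set U}) : 0 < maxs P -> maxs (lower_top P) = (maxs P).-1.
Proof.
move=> maxs_gt0; apply: maxs_eq => [i|].
  by rewrite in_setn => /orP[/andP[/memn_bounds ? ?]|/eqP->] //; lia.
by rewrite memn_setn eqxx orbT andbT; have := maxs_leqn P; lia.
Qed.

Lemma covers_drop_top L (P : {set U}) : covers L.+1 P -> covers L (drop_top P).1.
Proof.
rewrite /drop_top; case: eqP => [_|/eqP maxs_ne0] covP /=; first exact: covers_set1_ord0.
have /coversP[P0 le_maxL cover] := covP.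
apply/coversP; rewrite maxs_lower_top ?lt0n //; split=> [||x le_x].
- by rewrite in_setn memn0 //=; lia.
- lia.
have [y Py le_y] := cover x ltac:(lia).
by exists y; rewrite ?in_setn ?memnE ?Py //=; lia.
Qed.

Lemma drop_top_inj L : {in [set P | covers L.+1 P] &, injective drop_top}.
Proof.
move=> P1 P2; rewrite !inE => cov1 cov2.
have neq_set1 P : covers L.+1 P -> maxs P != 0 ->
    (lower_top P, memn P (maxs P).-1) != ([set ord0], false).
  move=> covP maxs_ne0; apply/negP => /eqP[lowerE bitE].
  have := maxs_lower_top (P := P) ltac:(lia); rewrite lowerE maxs_set1_ord0 => maxs1.
  by move: bitE; rewrite -maxs1 memn0 //; case/coversP: covP.
rewrite /drop_top.
case: (eqVneq (maxs P1) 0) => [maxs1|ne1]; case: (eqVneq (maxs P2) 0) => [maxs2|ne2].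
- by rewrite (covers_maxs0 cov1 maxs1) (covers_maxs0 cov2 maxs2).
- by move/esym/eqP; rewrite (negPf (neq_set1 _ cov2 ne2)).
- by move/eqP; rewrite (negPf (neq_set1 _ cov1 ne1)).
case=> lowerE bitE.
have eq_maxs : maxs P1 = maxs P2.
  by have := maxs_lower_top (P := P1) ltac:(lia); rewrite lowerE maxs_lower_top; lia.
rewrite eq_maxs in lowerE bitE; apply/setP => x; rewrite -!memnE.
have [xE|x_ne] := eqVneq (nat_of_ord x) (maxs P2).
  have [z1 Pz1 z1E] := maxs_mem (covers_neq0 cov1).
  have [z2 Pz2 z2E] := maxs_mem (covers_neq0 cov2).
  by rewrite xE -{1}eq_maxs -z1E -z2E !memnE Pz1 Pz2.
have [->|x_ne'] := eqVneq (nat_of_ord x) (maxs P2).-1; first by [].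
have /setP/(_ x) := lowerE; rewrite /lower_top !in_setn.
by rewrite eq_maxs x_ne (negPf x_ne') !andbT !orbF.
Qed.

Lemma drop_top_image_sub L :
  drop_top @: [set P | covers L.+1 P] \subset setX [set P | covers L P] [set: bool].
Proof.
apply/subsetP => Q /imsetP[P]; rewrite inE => covP ->.
by rewrite !inE covers_drop_top.
Qed.

Lemma ncoversS_image L : ncovers L.+1 = #|drop_top @: [set P | covers L.+1 P]|.
Proof. by rewrite (card_in_imset (@drop_top_inj L)). Qed.

Lemma double_ncovers L : 2 * ncovers L = #|setX [set P | covers L P] [set: bool]|.
Proof. by rewrite cardsX cardsT card_bool mulnC. Qed.

Lemma ncoversS_le_double L : ncovers L.+1 <= 2 * ncovers L.
Proof. by rewrite ncoversS_image double_ncovers subset_leq_card // drop_top_image_sub. Qed.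

Lemma drop_top_neq_segment L (P : {set U}) : 0 < L -> L < n -> covers L.+1 P ->
  drop_top P != (segment 0 L, false).
Proof.
move=> L_gt0 lt_Ln covP; have [_ maxsL] := @segment_bounds 0 L ltac:(lia).
rewrite /drop_top; case: (eqVneq (maxs P) 0) => [_|maxs_ne0]; apply/negP => /eqP dropE.
  by have := congr1 (maxs \o fst) dropE; rewrite /= maxsL maxs_set1_ord0; lia.
have := maxs_lower_top (P := P) ltac:(lia); rewrite [lower_top P](congr1 fst dropE) maxsL.
move=> maxsPE.
move: (congr1 snd dropE) => /= /negP; apply.
have [x xE] := @exists_ord L ltac:(lia).
have [y Py le_y] := covers_mem covP (x := x) ltac:(lia).
by apply/memnP; exists y => //; lia.
Qed.

Lemma ncoversS_lt_double L : 0 < L -> L < n -> ncovers L.+1 < 2 * ncovers L.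
Proof.
move=> L_gt0 lt_Ln; rewrite ncoversS_image double_ncovers.
apply/proper_card/properP; split; first exact: drop_top_image_sub.
exists (segment 0 L, false); first by rewrite !inE covers_segment //; lia.
apply/imsetP => -[P]; rewrite inE => covP /esym/eqP.
by apply/negP; apply: drop_top_neq_segment.
Qed.

Definition add_top (P : {set U}) a : {set U} := setn (fun x => memn P x || (x == a)).

Lemma in_add_top (P : {set U}) a (x : U) : (x \in add_top P a) = memn P x || (x == a :> nat).
Proof. exact: in_setn. Qed.

Lemma maxs_add_top (P : {set U}) a : maxs P < a -> a <= n -> maxs (add_top P a) = a.
Proof.
move=> lt_maxa le_an; apply: maxs_eq => [i|]; last by rewrite memn_setn eqxx orbT andbT.
by rewrite in_setn => /orP[/memn_bounds|/eqP->] //; lia.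
Qed.

Lemma mem_add_top (P : {set U}) a (x : U) : maxs P < a ->
  (x \in P) = (x \in add_top P a) && (x != a :> nat).
Proof.
move=> lt_maxa; rewrite in_add_top memnE.
case Px: (x \in P) => /=; last by case: eqP.
by apply/esym/eqP => xa; have := leq_maxs Px; lia.
Qed.

Lemma add_top_inj (P1 P2 : {set U}) a1 a2 : maxs P1 < a1 -> maxs P2 < a2 -> a1 <= n -> a2 <= n ->
  add_top P1 a1 = add_top P2 a2 -> P1 = P2.
Proof.
move=> lt1 lt2 le1 le2 addE; have a12 : a1 = a2.
  by rewrite -(maxs_add_top lt1 le1) addE maxs_add_top.
by apply/setP => x; rewrite (mem_add_top x lt1) (mem_add_top x lt2) addE a12.
Qed.

(* Covers of L + 2 arise from covers of L + 1 by adding max + 1 and from covers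
   of L by adding max + 2 ([0, L] is sent to {0} instead); only the former
   contain the element just below their top, so the images are disjoint. *)
Definition extend1 (P : {set U}) : {set U} := add_top P (maxs P).+1.
Definition extend2 L (P : {set U}) : {set U} :=
  if maxs P == L then [set ord0] else add_top P (maxs P).+2.

Lemma covers_extend1 L (P : {set U}) : L.+2 <= n -> covers L.+1 P -> covers L.+2 (extend1 P).
Proof.
move=> le_n /coversP[P0 le_maxL cover].
apply/coversP; rewrite /extend1 maxs_add_top; [split=> [||x le_x] | lia | lia].
- by rewrite in_add_top memnE P0.
- lia.
have [xE|x_ne] := eqVneq (nat_of_ord x) (maxs P).+1.
  by exists x; rewrite ?in_add_top ?xE ?eqxx ?orbT //; lia.
have [y Py le_y] := cover x ltac:(lia).
by exists y; rewrite ?in_add_top ?memnE ?Py //; lia.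
Qed.

Lemma covers_extend2 L (P : {set U}) : L.+2 <= n -> covers L P -> covers L.+2 (extend2 L P).
Proof.
move=> le_n covP; rewrite /extend2; case: eqP => [_|/eqP maxs_neL].
  exact: covers_set1_ord0.
have /coversP[P0 le_maxL cover] := covP.
apply/coversP; rewrite maxs_add_top; [split=> [||x le_x] | lia | lia].
- by rewrite in_add_top memnE P0.
- lia.
have [xE|x_ne] := eqVneq (nat_of_ord x) (maxs P).+2.
  by exists x; rewrite ?in_add_top ?xE ?eqxx ?orbT //; lia.
have [y Py le_y] : exists2 y : U, y \in P & y <= x <= y + (L - maxs P).
  have [xE'|x_ne'] := eqVneq (nat_of_ord x) (maxs P).+1; last by apply: cover; lia.
  have [y Py yE] := maxs_mem (covers_neq0 covP).
  by exists y; rewrite // yE xE'; lia.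
by exists y; rewrite ?in_add_top ?memnE ?Py //; lia.
Qed.

Lemma extend1_inj L : L.+2 <= n -> {in [set P | covers L.+1 P] &, injective extend1}.
Proof.
move=> le_n P1 P2; rewrite !inE => /coversP[_ le1 _] /coversP[_ le2 _] extE.
by apply: (add_top_inj _ _ _ _ extE); lia.
Qed.

Lemma extend2_inj L : L.+2 <= n -> {in [set P | covers L P] &, injective (extend2 L)}.
Proof.
move=> le_n P1 P2; rewrite !inE => cov1 cov2.
have /coversP[_ le1 _] := cov1; have /coversP[_ le2 _] := cov2.
rewrite /extend2.
case: (eqVneq (maxs P1) L) => [max1|ne1]; case: (eqVneq (maxs P2) L) => [max2|ne2].
- by rewrite (covers_maxsL cov1 max1) (covers_maxsL cov2 max2).
- by move/(congr1 maxs); rewrite maxs_set1_ord0 maxs_add_top //; lia.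
- by move/(congr1 maxs); rewrite maxs_set1_ord0 maxs_add_top //; lia.
by move=> extE; apply: (add_top_inj _ _ _ _ extE); lia.
Qed.

Lemma extend1_neq_extend2 L (P1 P2 : {set U}) : L.+2 <= n -> covers L.+1 P1 -> covers L P2 ->
  extend1 P1 != extend2 L P2.
Proof.
move=> le_n cov1 cov2; apply/eqP.
have /coversP[_ le1 _] := cov1; have /coversP[_ le2 _] := cov2.
have max1 : maxs (extend1 P1) = (maxs P1).+1 by apply: maxs_add_top; lia.
rewrite /extend2; case: (eqVneq (maxs P2) L) => [_|ne2] extE.
  by move: max1; rewrite extE maxs_set1_ord0.
have max2 : maxs (add_top P2 (maxs P2).+2) = (maxs P2).+2 by apply: maxs_add_top; lia.
have [z Pz zE] := maxs_mem (covers_neq0 cov1).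
have : z \in extend1 P1 by rewrite in_add_top memnE Pz.
rewrite extE in_add_top => /orP[/memn_bounds|/eqP]; move: max1; rewrite extE max2; lia.
Qed.

Lemma ncovers_fib L : L.+2 <= n -> ncovers L.+1 + ncovers L <= ncovers L.+2.
Proof.
move=> le_n; rewrite /ncovers -(card_in_imset (extend1_inj le_n)).
rewrite -(card_in_imset (extend2_inj le_n)) -cardsUI.
set I1 := imset _ _; set I2 := imset _ _.
have -> : I1 :&: I2 = set0.
  apply/setP => Q; rewrite !inE; apply/negP => /andP[/imsetP[P1 + ->] /imsetP[P2 +]].
  by rewrite !inE => cov1 cov2 /eqP; rewrite (negPf (extend1_neq_extend2 le_n cov1 cov2)).
rewrite cards0 addn0; apply/subset_leq_card/subsetP => Q; rewrite inE.
case/orP => /imsetP[P]; rewrite inE => covP ->; rewrite inE.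
  exact: covers_extend1.
exact: covers_extend2.
Qed.

Lemma kplus_segment : kplus n = segment 1 n.
Proof. by apply/setP => x; rewrite /kplus in_segment inE; have := ltn_ord x; lia. Qed.

Lemma ndiv_kplus : 0 < n -> ndiv (kplus n) = 2 * ncovers n.-1.
Proof. by move=> n_gt0; rewrite kplus_segment ndiv_segment ?subn1 //; lia. Qed.

Lemma mins_maxs_leqn (A : {set U}) : A != set0 -> mins A <= maxs A <= n.
Proof.
move=> A_ne0; have [a Aa _] := mins_mem A_ne0.
by rewrite maxs_leqn (leq_trans (mins_leq Aa)) ?leq_maxs.
Qed.

Lemma ndiv_hull (A : {set U}) : A != set0 ->
  ndiv (hull A) = (mins A).+1 * ncovers (maxs A - mins A).
Proof. by move=> A_ne0; rewrite ndiv_segment // mins_maxs_leqn. Qed.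

Lemma ncovers_span_bound m M : 0 < n -> m <= M <= n ->
  m.+1 * ncovers (M - m) <= 2 * ncovers n.-1 /\
  (m.+1 * ncovers (M - m) = 2 * ncovers n.-1 -> (m = 1 /\ M = n) \/ n = 1 \/ n = 3).
Proof.
move=> n_gt0; apply: p_span_bound => //.
- exact: ncovers0_le1.
- exact: ncovers_gt0.
- exact: ncovers_ltS.
- by move=> L _; apply: ncoversS_le_double.
- exact: ncoversS_lt_double.
- exact: ncovers_fib.
Qed.

Lemma ndiv_hull_bound (A : {set U}) : 0 < n -> A != set0 ->
  ndiv (hull A) <= ndiv (kplus n) /\
  (ndiv (hull A) = ndiv (kplus n) -> (mins A = 1 /\ maxs A = n) \/ n = 1 \/ n = 3).
Proof.
move=> n_gt0 A_ne0; rewrite ndiv_hull // ndiv_kplus //.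
exact: ncovers_span_bound (mins_maxs_leqn A_ne0).
Qed.

Lemma ndiv_le_kplus (A : {set U}) : 0 < n -> A != set0 -> ndiv A <= ndiv (kplus n).
Proof.
by move=> n_gt0 A_ne0; apply: leq_trans (ndiv_le_hull A_ne0) (ndiv_hull_bound n_gt0 A_ne0).1.
Qed.

Lemma ndiv_eq_kplus (A : {set U}) : 0 < n -> n != 1 -> n != 3 -> A != set0 ->
  ndiv A = ndiv (kplus n) -> A = kplus n.
Proof.
move=> n_gt0 n_ne1 n_ne3 A_ne0 eq_ndiv.
have [le_hull_kplus eq_hull_kplus] := ndiv_hull_bound n_gt0 A_ne0.
have eq_hull : ndiv A = ndiv (hull A).
  by apply/eqP; rewrite eqn_leq ndiv_le_hull // eq_ndiv.
have hullA : A = hull A.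
  by apply/eqP; apply: contraT => /(ndiv_lt_hull A_ne0); rewrite eq_hull ltnn.
have [[minA maxA]|[n1|n3]] := eq_hull_kplus (etrans (esym eq_hull) eq_ndiv).
- by rewrite hullA /hull minA maxA kplus_segment.
- by move/eqP: n_ne1.
- by move/eqP: n_ne3.
Qed.

Definition bitset x : {set U} := setn (fun i => ldigit 2 x i == 1).
Definition bitnum (B : {set U}) : nat := \sum_(t < n.+1) memn B t * 2 ^ t.

Lemma ldigit_bitnum (B : {set U}) i : ldigit 2 (bitnum B) i = memn B i.
Proof.
rewrite (@ldigit_sum 2 isT (fun t => nat_of_bool (memn B t))) => [|t]; last by case: memn.
by case: ltnP => // le_ni; rewrite /memn ltnNge le_ni.
Qed.

Lemma bitnum_lt (B : {set U}) : bitnum B < 2 ^ n.+1.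
Proof. by apply: (@sum_digits_lt 2 isT (fun t => nat_of_bool (memn B t))) => t; case: memn. Qed.

Lemma bitnumK (B : {set U}) : bitset (bitnum B) = B.
Proof. by apply/setP => x; rewrite in_setn ldigit_bitnum memnE; case: (x \in B). Qed.

Lemma bitnum_kplus : bitnum (kplus n) = 2 ^ n.+1 - 2.
Proof. by rewrite -sum_pos_pow2; apply: eq_bigr => t _; rewrite memnE inE. Qed.

Lemma bitset_inj x y :
  (forall i, n < i -> ldigit 2 x i = 0) -> (forall i, n < i -> ldigit 2 y i = 0) ->
  bitset x = bitset y -> x = y.
Proof.
move=> x_small y_small /setP xyE; apply: (eq_from_ldigit (isT : 1 < 2)) => i.
have [le_in|lt_ni] := leqP i n; last by rewrite x_small ?y_small.
by apply: ldigit2_eq; move: (xyE (inord i)); rewrite !in_setn inordK.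
Qed.

Lemma bitnum_gt0 (B : {set U}) : B != set0 -> 0 < bitnum B.
Proof.
case/set0Pn=> b Bb; apply: leq_trans (expn_gt0 2 b) (@ldigit_gt0_leq 2 isT _ b _).
by rewrite ldigit_bitnum memnE Bb.
Qed.

Section LunarDivisors.
Variable N : nat.
Hypothesis N_bounds : 2 ^ n <= N < 2 ^ n.+1.

Lemma ldigit_high t : n < t -> ldigit 2 N t = 0.
Proof. by move=> lt_nt; apply: (@ldigit_small 2 isT _ n.+1); case/andP: N_bounds. Qed.

Lemma ldigit_top : ldigit 2 N n = 1.
Proof.
case/andP: N_bounds => N_ge N_lt; rewrite /ldigit.
have : 0 < N %/ 2 ^ n by rewrite divn_gt0 ?expn_gt0.
have : N %/ 2 ^ n < 2 by rewrite ltn_divLR ?expn_gt0 // -expnS.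
by case: (N %/ 2 ^ n) => [|[|]].
Qed.

Lemma memn_bitset t : memn (bitset N) t = (ldigit 2 N t == 1).
Proof.
by rewrite memn_setn; case: ltnP => //= lt_nt; rewrite ldigit_high.
Qed.

Lemma bitset_neq0 : bitset N != set0.
Proof. by apply/set0Pn; exists ord_max; rewrite in_setn ldigit_top. Qed.

Lemma bit_sum_divisor m q t : lunar_mul 2 m q = N -> bit_sum m q t = (ldigit 2 N t == 1).
Proof. by move=> mqN; rewrite -mqN ldigit_lunar_mul2; case: bit_sum. Qed.

Lemma lunar_divisor_small m q : lunar_mul 2 m q = N ->
  (forall i, n < i -> ldigit 2 m i = 0) /\ (forall i, n < i -> ldigit 2 q i = 0).
Proof.
move=> mqN; have : bit_sum m q n by rewrite (bit_sum_divisor _ mqN) ldigit_top.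
case/existsP => i0 /andP[/eqP mi0 /eqP qi0].
have digit0 x i : ldigit 2 x i != 1 -> ldigit 2 x i = 0.
  by have := @ldigit_lt 2 isT x i; case: (ldigit 2 x i) => [|[|]].
split=> i lt_ni; apply: digit0; apply/eqP => digit1.
  have := bit_sumP digit1 qi0; rewrite (bit_sum_divisor _ mqN) ldigit_high //.
  by have := ltn_ord i0; lia.
have := bit_sumP mi0 digit1; rewrite (bit_sum_divisor _ mqN) ldigit_high //.
by have := ltn_ord i0; lia.
Qed.

Lemma lunar_divisor_sumset m q : lunar_mul 2 m q = N ->
  sumset_eq (bitset m) (bitset q) (bitset N).
Proof.
move=> mqN; apply: sumset_eqI => [b d|c].
  by rewrite !in_setn memn_bitset => /eqP mb /eqP qd; rewrite -(bit_sum_divisor _ mqN) bit_sumP.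
rewrite in_setn -(bit_sum_divisor _ mqN) => /existsP[i /andP[mi qci]].
have [b bE] := @exists_ord i ltac:(have := ltn_ord c; have := ltn_ord i; lia).
have [d dE] := @exists_ord (c - i) ltac:(have := ltn_ord c; lia).
by exists b, d; rewrite ?in_setn ?bE ?dE //; have := ltn_ord i; lia.
Qed.

Lemma sumset_lunar_mul (B D : {set U}) : sumset_eq B D (bitset N) ->
  lunar_mul 2 (bitnum B) (bitnum D) = N.
Proof.
move=> BDN; apply: (eq_from_ldigit (isT : 1 < 2)) => t.
rewrite ldigit_lunar_mul2 -ldigit2_eq1 -memn_bitset (memn_sumset _ BDN) /bit_sum.
by congr nat_of_bool; apply: eq_existsb => i; rewrite !ldigit_bitnum; case: memn; case: memn.
Qed.

Lemma lunar_ndiv2E : lunar_ndiv 2 N = ndiv (bitset N).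
Proof.
rewrite /lunar_ndiv ndivE; set S := [set m : 'I_(2 ^ N) | _].
have bitset_inj_S : {in S &, injective (fun m : 'I_(2 ^ N) => bitset m)}.
  move=> m1 m2; rewrite !inE => /andP[_ /existsP[q1 /eqP m1N]] /andP[_ /existsP[q2 /eqP m2N]].
  move/bitset_inj => eq_m; apply/val_inj/eq_m.
  - by case: (lunar_divisor_small m1N).
  - by case: (lunar_divisor_small m2N).
rewrite -(card_in_imset bitset_inj_S); apply: eq_card => B; rewrite [in RHS]inE.
apply/imsetP/existsP => [[m]|[D BDN]].
  rewrite inE => /andP[_ /existsP[q /eqP mqN]] ->.
  by exists (bitset q); apply: lunar_divisor_sumset.
have le_pow : 2 ^ n.+1 <= 2 ^ N.
  by case/andP: N_bounds => N_ge _; rewrite leq_exp2l //; apply: leq_trans N_ge; apply: ltn_expl.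
have [B_ne0 _ _ _] := divisor_bounds bitset_neq0 BDN.
exists (Ordinal (leq_trans (bitnum_lt B) le_pow)); last by rewrite /= bitnumK.
rewrite inE bitnum_gt0 //=; apply/existsP; exists (Ordinal (leq_trans (bitnum_lt D) le_pow)).
by rewrite /= sumset_lunar_mul.
Qed.

End LunarDivisors.

End Subsets.

Theorem mainTheorem2 (k : nat) (hk : 1 <= k) :
  (forall A : {set 'I_k.+1}, A != set0 -> ndiv A <= ndiv (kplus k)) /\
  (k != 1 -> k != 3 -> forall A : {set 'I_k.+1},
     A != set0 -> ndiv A = ndiv (kplus k) -> A = kplus k) /\
  (* lunar form, for (k+1)-digit binary numbers *)
  (forall n : nat, 2 ^ k <= n < 2 ^ k.+1 ->
     lunar_ndiv 2 n <= lunar_ndiv 2 (2 ^ k.+1 - 2)) /\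
  (k.+1 != 2 -> k.+1 != 4 -> forall n : nat, 2 ^ k <= n < 2 ^ k.+1 ->
     lunar_ndiv 2 n = lunar_ndiv 2 (2 ^ k.+1 - 2) -> n = 2 ^ k.+1 - 2).
Proof.
have kplus_bounds : 2 ^ k <= 2 ^ k.+1 - 2 < 2 ^ k.+1.
  by rewrite expnS; have := ltn_expl k (isT : 1 < 2); lia.
(* abstracting 2 ^ k.+1 - 2 avoids costly conversions between lunar_ndiv terms *)
have := bitnum_kplus k; move: (2 ^ k.+1 - 2) kplus_bounds => M M_bounds kplusE.
have lunar_kplus : lunar_ndiv 2 M = ndiv (kplus k).
  by rewrite (lunar_ndiv2E M_bounds) -kplusE bitnumK.
have N_small N : N < 2 ^ k.+1 -> forall i, k < i -> ldigit 2 N i = 0.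
  by move=> N_lt i; apply: (@ldigit_small 2 isT _ k.+1).
split; first by move=> A; apply: ndiv_le_kplus.
split; first by move=> k_ne1 k_ne3 A; apply: ndiv_eq_kplus.
split=> [N N_bounds|k_ne1 k_ne3 N N_bounds].
  by rewrite lunar_kplus (lunar_ndiv2E N_bounds) ndiv_le_kplus ?bitset_neq0.
rewrite lunar_kplus (lunar_ndiv2E N_bounds) => eq_ndiv.
have bitsetN := ndiv_eq_kplus hk k_ne1 k_ne3 (bitset_neq0 N_bounds) eq_ndiv.
case/andP: M_bounds => _ M_lt; case/andP: N_bounds => _ N_lt.
apply: (bitset_inj (N_small _ N_lt) (N_small _ M_lt)).
by rewrite bitsetN -kplusE bitnumK.
Qed.
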